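(* Let $n>5$ with $n\equiv 0\pmod 4$, and consider even $r\in[2,n-2]$. (i) For $r\equiv 0\pmod 4$, $E(D_n^s[r,\boldsymbol{n-r}])$ is strictly increasing in $r$; hence $E(D_n^s[n-4,\boldsymbol 4])>E(D_n^s[n-8,\boldsymbol 8])>\dots>E(D_n^s[8,\boldsymbol{n-8}])>E(D_n^s[4,\boldsymbol{n-4}])$, and the maximum over such $r$ is attained by $D_n^s[n-4,\boldsymbol 4]$ (negative cycle of length $4$). (ii) For $r\equiv 2\pmod 4$, $E(D_n^s[r,\boldsymbol{n-r}])$ is strictly decreasing in $r$; hence $E(D_n^s[2,\boldsymbol{n-2}])>E(D_n^s[6,\boldsymbol{n-6}])>\dots>E(D_n^s[n-6,\boldsymbol 6])>E(D_n^s[n-2,\boldsymbol 2])$, and the maximum over such $r$ is attained at $r=2$.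
   Context: A signed digraph (sidigraph) is a digraph in which every arc carries a sign $+1$ or $-1$; its adjacency matrix $A(S)=[a_{ij}]$ has $a_{ij}$ equal to the sign of the arc $w_iw_j$ if it exists and $0$ otherwise. If $\rho_1,\dots,\rho_n$ are the eigenvalues of $A(S)$, the energy of $S$ is $E(S)=\sum_{k=1}^n|\mathrm{Re}(\rho_k)|$. The sign of a directed cycle is the product of the signs of its arcs. For $k\ge 2$, $C_k$ denotes a directed cycle of length $k$ with sign $+1$ and $\boldsymbol{C}_k$ a directed cycle of length $k$ with sign $-1$. It is known that $E(C_k)=2\cot\frac{\pi}{k}$ if $k\equiv0\pmod 4$, $2\csc\frac{\pi}{k}$ if $k\equiv 2\pmod 4$, $\csc\frac{\pi}{2k}$ if $k$ is odd; and $E(\boldsymbol C_k)=2\csc\frac{\pi}{k}$ if $k\equiv0\pmod 4$, $2\cot\frac{\pi}{k}$ if $k\equiv 2\pmod 4$, $\csc\frac{\pi}{2k}$ if $k$ is odd. For integers $p,q\ge 2$ with $p+q\le n$, $D_n^s[p,q]$, $D_n^s[\boldsymbol p,\boldsymbol q]$, $D_n^s[\boldsymbol p,q]$, $D_n^s[p,\boldsymbol q]$ denote an $n$-vertex sidigraph whose only directed cycles are two vertex-disjoint cycles of lengths $p$ and $q$ (all other vertices lying on no directed cycle), where a bold entry indicates that the cycle of that length is negative and a non-bold entry that it is positive. Its energy is the sum of the energies of its two cycles, e.g. $E(D_n^s[p,\boldsymbol q])=E(C_p)+E(\boldsymbol C_q)$; in particular the order of the two entries does not matter. *)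

From Stdlib Require Import Reals Arith.
Open Scope R_scope.

Definition cot (x : R) : R := cos x / sin x.
Definition csc (x : R) : R := / sin x.

Definition E_poscycle (k : nat) : R :=
  if (k mod 4 =? 0)%nat then 2 * cot (PI / INR k)
  else if (k mod 4 =? 2)%nat then 2 * csc (PI / INR k)
  else csc (PI / (2 * INR k)).

Definition E_negcycle (k : nat) : R :=
  if (k mod 4 =? 0)%nat then 2 * csc (PI / INR k)
  else if (k mod 4 =? 2)%nat then 2 * cot (PI / INR k)
  else csc (PI / (2 * INR k)).

(* Energy of D_n^s[p, bold q]: positive p-cycle and negative q-cycle,
   vertex-disjoint, all other vertices on no cycle.  E = E(C_p) + E(bold C_q). *)
Definition E_D_pos_neg (p q : nat) : R := E_poscycle p + E_negcycle q.

From Stdlib Require Import Reals Arith Lra Lia ZifyNat.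
From Coquelicot Require Import Coquelicot.
Open Scope R_scope.

(* For n ≡ 0 (mod 4) and an even r, the two cycles of
   D_n^s[r, bold (n-r)] have lengths of the same residue mod 4, and in both
   cases the energy is a value of the single real function
     split_energy N t = 2 cot (π/t) + 2 csc (π/(N-t)),   N = n,
   namely at t = r when r ≡ 0 (mod 4) and at t = n - r when r ≡ 2 (mod 4).
   So both parts of the theorem follow from one analytic fact: t ↦ split_energy N t
   is strictly increasing on [2, N-2].  Its derivative is
     2π / (t² sin²(π/t)) - 2π cos(π/s) / (s² sin²(π/s)),   s = N - t;
   the first term is at least 2/π because t sin(π/t) ≤ π, and the second is
   below 2/π because b² cos b < sin² b for 0 < b ≤ π/2 (Taylor bounds), so the
   derivative is positive and the mean value theorem gives monotonicity. *)

(* b² cos b < sin² b on (0, π/2], from sin b ≥ b - b³/6 and cos b ≤ 1 - b²/2 + b⁴/24. *)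
Lemma sq_mul_cos_lt_sin_sq (b : R) : 0 < b <= PI / 2 -> b * b * cos b < sin b * sin b.
Proof.
  intros [Hb_pos Hb_le].
  assert (HPI := PI_4).
  destruct (sin_bound b 0) as [Hsin _]; try lra.
  destruct (cos_bound b 0) as [_ Hcos]; try lra.
  unfold sin_approx, cos_approx in *; simpl in *.
  unfold sin_term, cos_term in *; simpl in *.
  assert (Hsin' : b - b * b * b / 6 <= sin b) by lra.
  assert (Hcos' : cos b <= 1 - b * b / 2 + b * b * b * b / 24) by lra.
  clear Hsin Hcos.
  assert (Hb2 : b <= 2) by lra.
  assert (Hlow_pos : 0 < b - b * b * b / 6) by nra.
  assert (Hsin_sq : sin b * sin b >= (b - b * b * b / 6) * (b - b * b * b / 6)) by nra.
  assert (Hcos_mul : b * b * cos b <= b * b * (1 - b * b / 2 + b * b * b * b / 24))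
    by (apply Rmult_le_compat_l; nra).
  assert (Hb4 : 0 < b * b * b * b * (12 - b * b)).
  { assert (0 < b * b) by nra. assert (0 < b * b * b * b) by nra.
    apply Rmult_lt_0_compat; nra. }
  nra.
Qed.

Lemma pi_div_bounds (t : R) : 2 <= t -> 0 < PI / t <= PI / 2 /\ 0 < sin (PI / t).
Proof.
  intros Ht. assert (HPI := PI_RGT_0).
  assert (Hpos : 0 < PI / t) by (apply Rdiv_lt_0_compat; lra).
  assert (Hle : PI / t <= PI / 2)
    by (apply Rmult_le_compat_l; [lra | apply Rinv_le_contravar; lra]).
  split; [lra |]. apply sin_gt_0; lra.
Qed.

Definition cot_slope (t : R) : R := 2 * PI / (t ^ 2 * sin (PI / t) ^ 2).

Definition csc_slope (s : R) : R :=
  2 * PI * cos (PI / s) / (s ^ 2 * sin (PI / s) ^ 2).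

Lemma is_derive_cot_energy (t : R) :
  2 <= t -> is_derive (fun t => 2 * cot (PI / t)) t (cot_slope t).
Proof.
  intros Ht. destruct (pi_div_bounds t Ht) as [_ Hsin].
  unfold cot, cot_slope, Rdiv in *.
  auto_derive; [repeat split; lra |].
  assert (Hpyth := sin2_cos2 (PI * / t)). unfold Rsqr in Hpyth.
  field_simplify; try (repeat split; lra).
  replace (cos (PI * / t) ^ 2) with (1 - sin (PI * / t) ^ 2) by (simpl; lra).
  f_equal; ring.
Qed.

Lemma is_derive_csc_energy (N t : R) :
  2 <= N - t -> is_derive (fun t => 2 * csc (PI / (N - t))) t (- csc_slope (N - t)).
Proof.
  intros Hs. destruct (pi_div_bounds (N - t) Hs) as [_ Hsin].
  unfold csc, csc_slope, Rdiv, Rminus in *.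
  auto_derive; [repeat split; lra |].
  field; lra.
Qed.

(* Since t sin(π/t) ≤ π, the cotangent slope is at least 2/π. *)
Lemma cot_slope_ge (t : R) : 2 <= t -> 2 / PI <= cot_slope t.
Proof.
  intros Ht. assert (HPI := PI_RGT_0).
  destruct (pi_div_bounds t Ht) as [Hang Hsin].
  assert (Hsin_lt : sin (PI / t) < PI / t) by (apply sin_lt_x; lra).
  assert (Hprod : 0 < t * sin (PI / t) <= PI).
  { split; [apply Rmult_lt_0_compat; lra |].
    replace PI with (t * (PI / t)) at 2 by (field; lra).
    apply Rmult_le_compat_l; lra. }
  unfold cot_slope.
  replace (t ^ 2 * sin (PI / t) ^ 2) with ((t * sin (PI / t)) * (t * sin (PI / t))) by ring.
  replace (2 / PI) with (2 * PI / (PI * PI)) by (field; lra).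
  apply Rmult_le_compat_l; [lra |].
  apply Rinv_le_contravar; [nra |].
  apply Rmult_le_compat; lra.
Qed.

(* By b² cos b < sin² b with b = π/s, the cosecant slope is below 2/π. *)
Lemma csc_slope_lt (s : R) : 2 <= s -> csc_slope s < 2 / PI.
Proof.
  intros Hs. assert (HPI := PI_RGT_0).
  destruct (pi_div_bounds s Hs) as [Hang Hsin].
  assert (Hkey := sq_mul_cos_lt_sin_sq (PI / s) Hang).
  set (Y := s ^ 2 * sin (PI / s) ^ 2).
  assert (HY : 0 < Y) by (apply Rmult_lt_0_compat; apply pow_lt; lra).
  assert (Hcos_Y : PI * PI * cos (PI / s) < Y).
  { replace (PI * PI) with (s * s * (PI / s * (PI / s))) by (field; lra).
    unfold Y. simpl.
    replace (s * s * (PI / s * (PI / s)) * cos (PI / s))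
      with (s * s * (PI / s * (PI / s) * cos (PI / s))) by ring.
    replace (s * (s * 1) * (sin (PI / s) * (sin (PI / s) * 1)))
      with (s * s * (sin (PI / s) * sin (PI / s))) by ring.
    apply Rmult_lt_compat_l; nra. }
  unfold csc_slope. fold Y.
  apply (Rmult_lt_reg_r (PI * Y)); [nra |].
  replace (2 * PI * cos (PI / s) / Y * (PI * Y)) with (2 * (PI * PI * cos (PI / s)))
    by (field; lra).
  replace (2 / PI * (PI * Y)) with (2 * Y) by (field; lra).
  lra.
Qed.

(* The common shape of the energies: positive cycle of length t counted by a
   cotangent, negative cycle of length N - t counted by a cosecant. *)
Definition split_energy (N t : R) : R := 2 * cot (PI / t) + 2 * csc (PI / (N - t)).

Lemma split_energy_increasing (N x y : R) :
  2 <= x -> x < y -> y <= N - 2 -> split_energy N x < split_energy N y.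
Proof.
  intros Hx Hxy Hy.
  destruct (MVT_cor2 (split_energy N) (fun t => cot_slope t + - csc_slope (N - t)) x y Hxy)
    as [c [Hmvt Hc]].
  { intros t Ht. apply is_derive_Reals.
    apply (is_derive_plus (fun t => 2 * cot (PI / t)) (fun t => 2 * csc (PI / (N - t)))).
    - apply is_derive_cot_energy; lra.
    - apply is_derive_csc_energy; lra. }
  assert (Hslope : 0 < cot_slope c - csc_slope (N - c)).
  { assert (Hcot := cot_slope_ge c ltac:(lra)).
    assert (Hcsc := csc_slope_lt (N - c) ltac:(lra)). lra. }
  assert (Hgap : 0 < split_energy N y - split_energy N x)
    by (rewrite Hmvt; apply Rmult_lt_0_compat; lra).
  lra.
Qed.

(* For r ≡ n ≡ 0 (mod 4) both cycle lengths are ≡ 0 (mod 4): the positive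
   r-cycle contributes 2 cot (π/r) and the negative one 2 csc (π/(n-r)). *)
Lemma energy_split_0mod4 (n r : nat) :
  (n mod 4 = 0)%nat -> (r mod 4 = 0)%nat -> (r <= n)%nat ->
  E_D_pos_neg r (n - r) = split_energy (INR n) (INR r).
Proof.
  intros Hn Hr Hle.
  assert (Hnr : ((n - r) mod 4 = 0)%nat) by lia.
  unfold E_D_pos_neg, E_poscycle, E_negcycle, split_energy.
  rewrite Hr, Hnr, minus_INR by exact Hle. reflexivity.
Qed.

(* For r ≡ 2, n ≡ 0 (mod 4) both cycle lengths are ≡ 2 (mod 4): now the
   negative (n-r)-cycle contributes the cotangent, so the roles of r and n-r
   in split_energy are exchanged. *)
Lemma energy_split_2mod4 (n r : nat) :
  (n mod 4 = 0)%nat -> (r mod 4 = 2)%nat -> (r <= n)%nat ->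
  E_D_pos_neg r (n - r) = split_energy (INR n) (INR (n - r)).
Proof.
  intros Hn Hr Hle.
  assert (Hnr : ((n - r) mod 4 = 2)%nat) by lia.
  unfold E_D_pos_neg, E_poscycle, E_negcycle, split_energy.
  rewrite Hr, Hnr. simpl.
  rewrite minus_INR by exact Hle.
  replace (INR n - (INR n - INR r)) with (INR r) by ring.
  ring.
Qed.

Lemma split_energy_lt_nat (n a b : nat) :
  (2 <= a)%nat -> (a < b)%nat -> (b <= n - 2)%nat ->
  split_energy (INR n) (INR a) < split_energy (INR n) (INR b).
Proof.
  intros Ha Hab Hb. apply split_energy_increasing.
  - apply (le_INR 2 a) in Ha. simpl in Ha. lra.
  - apply lt_INR, Hab.
  - assert (Hn2 : (2 <= n)%nat) by lia.
    apply le_INR in Hb. rewrite minus_INR in Hb by exact Hn2. simpl in Hb. lra.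
Qed.

Theorem lemma3p3 (n : nat) (Hn : (5 < n)%nat) (Hn4 : (n mod 4 = 0)%nat) :
  (* (i) r ≡ 0 mod 4: strictly increasing, maximum at r = n-4 *)
  ((forall r r' : nat,
      (2 <= r)%nat -> (r' <= n - 2)%nat -> (r mod 4 = 0)%nat -> (r' mod 4 = 0)%nat ->
      (r < r')%nat ->
      E_D_pos_neg r (n - r) < E_D_pos_neg r' (n - r')) /\
   (forall r : nat,
      (2 <= r)%nat -> (r <= n - 2)%nat -> (r mod 4 = 0)%nat ->
      E_D_pos_neg r (n - r) <= E_D_pos_neg (n - 4) 4)) /\
  (* (ii) r ≡ 2 mod 4: strictly decreasing, maximum at r = 2 *)
  ((forall r r' : nat,
      (2 <= r)%nat -> (r' <= n - 2)%nat -> (r mod 4 = 2)%nat -> (r' mod 4 = 2)%nat ->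
      (r < r')%nat ->
      E_D_pos_neg r' (n - r') < E_D_pos_neg r (n - r)) /\
   (forall r : nat,
      (2 <= r)%nat -> (r <= n - 2)%nat -> (r mod 4 = 2)%nat ->
      E_D_pos_neg r (n - r) <= E_D_pos_neg 2 (n - 2))).
Proof.
  split; split.
  - intros r r' Hr Hr' Hr4 Hr'4 Hlt.
    rewrite !energy_split_0mod4 by lia.
    apply split_energy_lt_nat; lia.
  - intros r Hr Hr' Hr4.
    replace (E_D_pos_neg (n - 4) 4) with (E_D_pos_neg (n - 4) (n - (n - 4)))
      by (f_equal; lia).
    rewrite !energy_split_0mod4 by lia.
    destruct (Nat.eq_dec r (n - 4)) as [-> | Hne]; [apply Rle_refl |].
    left. apply split_energy_lt_nat; lia.
  - intros r r' Hr Hr' Hr4 Hr'4 Hlt.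
    rewrite !energy_split_2mod4 by lia.
    apply split_energy_lt_nat; lia.
  - intros r Hr Hr' Hr4.
    rewrite !energy_split_2mod4 by lia.
    destruct (Nat.eq_dec r 2) as [-> | Hne]; [apply Rle_refl |].
    left. apply split_energy_lt_nat; lia.
Qed.
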